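(* In the Reissner–Nordström spacetime with $m^2\ge q^2$ (and $m>0$), let $r_+=m+\sqrt{m^2-q^2}$. Define, for a vector field $\vec A$, $Q[\vec A]=\int_0^{2\pi}d\varphi\int_0^\pi\sin\theta\,d\theta\int_{r_+}^{\infty}(-A^t)\,r^2\,dr$ (the flux through a slice $t=\mathrm{const}$, $r>r_+$). Then $$Q_1\equiv Q[\vec j(\vec\xi_1)]=\frac{4\pi}{15\,r_+}\left(6-14\frac{m}{r_+}+14\frac{m^2}{r_+^2}-5\frac{m^3}{r_+^3}\right),$$ and, for each $a\in\{2,3,4\}$, $$Q_2\equiv Q[\vec j(\vec\xi_a,\vec\xi_a,\vec\xi_1)]=\frac{8\pi}{27}\,r_+\left(13-16\frac{m}{r_+}+16\frac{m^2}{r_+^2}\right).$$ Moreover $Q[\vec{\mathcal J}(\vec\xi_1)]=4\pi q^2/r_+$ where $\mathcal J^\alpha(\vec\xi_1)=T^{\alpha\beta}\xi_{1\beta}$ with $T^\mu{}_\nu=\frac{q^2}{r^4}\mathrm{diag}(-1,-1,1,1)$. In the Schwarzschild case $q=0$: $Q_1=\pi/(4m)$ and $Q_2=16\pi m/3$.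
   Context: The Reissner–Nordström metric is $ds^2=-f\,dt^2+f^{-1}dr^2+r^2(d\theta^2+\sin^2\theta\,d\varphi^2)$, $f=1-\frac{2m}{r}+\frac{q^2}{r^2}$, considered for $r>r_+$. Killing vectors: $\vec\xi_1=\partial_t$, $\vec\xi_2=\sin\varphi\,\partial_\theta+\cos\varphi\cot\theta\,\partial_\varphi$, $\vec\xi_3=\cos\varphi\,\partial_\theta-\sin\varphi\cot\theta\,\partial_\varphi$, $\vec\xi_4=\partial_\varphi$. The Bel tensor is $$B_{\alpha\beta\lambda\mu}= R_{\alpha\rho\lambda\sigma} R_{\beta}{}^{\rho}{}_{\mu}{}^{\sigma} +R_{\alpha\rho\mu\sigma} R_{\beta}{}^{\rho}{}_{\lambda}{}^{\sigma} -\tfrac{1}{2}g_{\alpha\beta} R_{\rho\tau\lambda\sigma}R^{\rho\tau}{}_{\mu}{}^{\sigma} -\tfrac{1}{2}g_{\lambda\mu} R_{\alpha\rho\sigma\tau}R_{\beta}{}^{\rho\sigma\tau}+ \tfrac{1}{8}g_{\alpha\beta}g_{\lambda\mu} R_{\rho\tau\sigma\nu} R^{\rho\tau\sigma\nu},$$ and the Bel current is $j_\mu(\vec\xi_1,\vec\xi_2,\vec\xi_3)=B_{(\alpha\beta\lambda)\mu}\xi_1^\alpha\xi_2^\beta\xi_3^\lambda$, $\vec j(\vec\xi)=\vec j(\vec\xi,\vec\xi,\vec\xi)$. $A^t$ denotes the $t$-component of $\vec A$ in coordinates $(t,r,\theta,\varphi)$. *)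

From Stdlib Require Import Reals.
From Coquelicot Require Import Coquelicot.
Open Scope R_scope.

(* A point of the chart: coordinates x 0 = t, x 1 = r, x 2 = theta, x 3 = phi. *)
Definition pt := nat -> R.
Definition mkpt (t r th ph : R) : pt :=
  fun i => match i with 0%nat => t | 1%nat => r | 2%nat => th | _ => ph end.
Definition upd (x : pt) (k : nat) (s : R) : pt :=
  fun i => if Nat.eqb i k then s else x i.
Definition pd (k : nat) (F : pt -> R) (x : pt) : R :=
  Derive (fun s => F (upd x k s)) (x k).
Definition sum4 (F : nat -> R) : R := F 0%nat + F 1%nat + F 2%nat + F 3%nat.

Section RN.
Variables m q : R.

Definition fRN (r : R) : R := 1 - 2 * m / r + q ^ 2 / r ^ 2.
Definition rplus : R := m + sqrt (m ^ 2 - q ^ 2).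

Definition gl (mu nu : nat) (x : pt) : R :=
  match mu, nu with
  | 0%nat, 0%nat => - fRN (x 1%nat)
  | 1%nat, 1%nat => / fRN (x 1%nat)
  | 2%nat, 2%nat => (x 1%nat) ^ 2
  | 3%nat, 3%nat => (x 1%nat) ^ 2 * (sin (x 2%nat)) ^ 2
  | _, _ => 0
  end.
Definition gu (mu nu : nat) (x : pt) : R :=
  match mu, nu with
  | 0%nat, 0%nat => - / fRN (x 1%nat)
  | 1%nat, 1%nat => fRN (x 1%nat)
  | 2%nat, 2%nat => / (x 1%nat) ^ 2
  | 3%nat, 3%nat => / ((x 1%nat) ^ 2 * (sin (x 2%nat)) ^ 2)
  | _, _ => 0
  end.

Definition Gam (l a b : nat) (x : pt) : R :=
  / 2 * sum4 (fun s => gu l s x *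
     (pd a (gl s b) x + pd b (gl s a) x - pd s (gl a b) x)).

Definition RiemU (rho sig mu nu : nat) (x : pt) : R :=
  pd mu (Gam rho nu sig) x - pd nu (Gam rho mu sig) x
  + sum4 (fun l => Gam rho mu l x * Gam l nu sig x)
  - sum4 (fun l => Gam rho nu l x * Gam l mu sig x).

Definition Riem (a b c d : nat) (x : pt) : R :=
  sum4 (fun r => gl a r x * RiemU r b c d x).

Definition Bel (al be la mu : nat) (x : pt) : R :=
  sum4 (fun rho => sum4 (fun sig => sum4 (fun a => sum4 (fun b =>
     Riem al rho la sig x * gu rho a x * gu sig b x * Riem be a mu b x))))
  + sum4 (fun rho => sum4 (fun sig => sum4 (fun a => sum4 (fun b =>
     Riem al rho mu sig x * gu rho a x * gu sig b x * Riem be a la b x))))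
  - / 2 * gl al be x *
    sum4 (fun rho => sum4 (fun tau => sum4 (fun sig =>
     sum4 (fun a => sum4 (fun b => sum4 (fun c =>
       Riem rho tau la sig x * gu rho a x * gu tau b x * gu sig c x
       * Riem a b mu c x))))))
  - / 2 * gl la mu x *
    sum4 (fun rho => sum4 (fun sig => sum4 (fun tau =>
     sum4 (fun a => sum4 (fun b => sum4 (fun c =>
       Riem al rho sig tau x * gu rho a x * gu sig b x * gu tau c x
       * Riem be a b c x))))))
  + / 8 * gl al be x * gl la mu x *
    sum4 (fun rho => sum4 (fun tau => sum4 (fun sig => sum4 (fun nu =>
     sum4 (fun a => sum4 (fun b => sum4 (fun c => sum4 (fun d =>
       Riem rho tau sig nu x * gu rho a x * gu tau b x * gu sig c x
       * gu nu d x * Riem a b c d x)))))))).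

(* vector fields are given by their contravariant components *)
Definition vfield := pt -> nat -> R.

Definition belj (X1 X2 X3 : vfield) (mu : nat) (x : pt) : R :=
  / 6 * sum4 (fun al => sum4 (fun be => sum4 (fun la =>
    (Bel al be la mu x + Bel al la be mu x + Bel be al la mu x
     + Bel be la al mu x + Bel la al be mu x + Bel la be al mu x)
    * X1 x al * X2 x be * X3 x la))).

Definition beljU (X1 X2 X3 : vfield) : vfield :=
  fun x nu => sum4 (fun mu => gu nu mu x * belj X1 X2 X3 mu x).

Definition xi1 : vfield := fun x i => match i with 0%nat => 1 | _ => 0 end.
Definition xi2 : vfield := fun x i => match i with
  | 2%nat => sin (x 3%nat)
  | 3%nat => cos (x 3%nat) * (cos (x 2%nat) / sin (x 2%nat))
  | _ => 0 end.
Definition xi3 : vfield := fun x i => match i with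
  | 2%nat => cos (x 3%nat)
  | 3%nat => - sin (x 3%nat) * (cos (x 2%nat) / sin (x 2%nat))
  | _ => 0 end.
Definition xi4 : vfield := fun x i => match i with 3%nat => 1 | _ => 0 end.

Definition Tmix (mu nu : nat) (x : pt) : R :=
  match mu, nu with
  | 0%nat, 0%nat => - (q ^ 2 / (x 1%nat) ^ 4)
  | 1%nat, 1%nat => - (q ^ 2 / (x 1%nat) ^ 4)
  | 2%nat, 2%nat => q ^ 2 / (x 1%nat) ^ 4
  | 3%nat, 3%nat => q ^ 2 / (x 1%nat) ^ 4
  | _, _ => 0
  end.
Definition EMcur (X : vfield) : vfield :=
  fun x al => sum4 (fun be =>
    sum4 (fun nu => Tmix al nu x * gu nu be x) * sum4 (fun ga => gl be ga x * X x ga)).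

Definition Qflux (t0 : R) (A : vfield) : R :=
  RInt (fun ph =>
    RInt (fun th => sin th *
      RInt_gen (fun r => - A (mkpt t0 r th ph) 0%nat * r ^ 2)
               (at_right rplus) (Rbar_locally p_infty)) 0 PI) 0 (2 * PI).

End RN.

(* The spacetime is static and spherically symmetric, so its curvature is computed in
   closed form on the exterior: the coordinate 2-planes diagonalize the Riemann tensor,
   with sectional curvatures built from f''/2, f'/(2r) and (1 - f)/r^2. Contracted with
   the Killing vectors, the Bel current gives an integrand r^2 (-j^t) that factors into an
   angular weight times a polynomial in 1/r. The radial integral is read off an explicit
   primitive in u = 1/r, the angular integrals are elementary, and the horizon equation
   r_+^2 - 2 m r_+ + q^2 = 0 brings the result to the stated form. *)

From Stdlib Require Import Reals Lra Lia.
From Coquelicot Require Import Coquelicot.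
Open Scope R_scope.

Ltac nonzero := repeat match goal with
  | |- _ /\ _ => split
  | |- True => exact I
  | |- _ * _ <> 0 => apply Rmult_integral_contrapositive_currified
  | |- _ => assumption
  | |- _ => lra
  end.

Lemma sum4_ext (F G : nat -> R) : (forall i, F i = G i) -> sum4 F = sum4 G.
Proof. intros H. unfold sum4. rewrite !H. reflexivity. Qed.

(** * The metric function *)

Section Metric.
Variables m q : R.

Definition dfRN (r : R) : R := 2 * m / r ^ 2 - 2 * q ^ 2 / r ^ 3.
Definition d2fRN (r : R) : R := - 4 * m / r ^ 3 + 6 * q ^ 2 / r ^ 4.

Lemma is_derive_fRN r : r <> 0 -> is_derive (fRN m q) r (dfRN r).
Proof. intros Hr. unfold fRN, dfRN. auto_derive; [nonzero | field; auto]. Qed.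

Lemma is_derive_dfRN r : r <> 0 -> is_derive dfRN r (d2fRN r).
Proof. intros Hr. unfold dfRN, d2fRN. auto_derive; [nonzero | field; auto]. Qed.

Lemma rplus_ge_m : m <= rplus m q.
Proof. unfold rplus. pose proof (sqrt_pos (m ^ 2 - q ^ 2)). lra. Qed.

Lemma rplus_horizon : q ^ 2 <= m ^ 2 -> q ^ 2 = 2 * m * rplus m q - rplus m q ^ 2.
Proof.
  intros Hmq. unfold rplus.
  assert (Hs := sqrt_sqrt (m ^ 2 - q ^ 2) ltac:(lra)).
  set (s := sqrt (m ^ 2 - q ^ 2)) in *. nra.
Qed.

Lemma fRN_pos r : 0 < m -> rplus m q < r -> 0 < fRN m q r.
Proof.
  intros Hm Hr. pose proof rplus_ge_m as Hge.
  assert (Hr2 : 0 < r ^ 2) by (apply pow_lt; lra).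
  replace (fRN m q r) with (((r - m) ^ 2 - (m ^ 2 - q ^ 2)) / r ^ 2)
    by (unfold fRN; field; lra).
  apply Rdiv_lt_0_compat; [|exact Hr2].
  destruct (Rle_or_lt 0 (m ^ 2 - q ^ 2)) as [Hd|Hd]; [|nra].
  unfold rplus in Hr. pose proof (sqrt_sqrt _ Hd). pose proof (sqrt_pos (m ^ 2 - q ^ 2)). nra.
Qed.

Lemma fRN_numerator_neq0 r : r <> 0 -> fRN m q r <> 0 -> (r - 2 * m) * r + q ^ 2 <> 0.
Proof.
  intros Hr Hf Hc. apply Hf. unfold fRN.
  replace (1 - 2 * m / r + q ^ 2 / r ^ 2) with (((r - 2 * m) * r + q ^ 2) / r ^ 2)
    by (field; exact Hr).
  rewrite Hc. field. exact Hr.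
Qed.

End Metric.

(** * Curvature on the exterior *)

Ltac derive_side := repeat match goal with
  | |- ex_derive (fun x => fRN ?m ?q x) ?r => exists (dfRN m q r); apply is_derive_fRN; assumption
  | |- ex_derive (fun x => dfRN ?m ?q x) ?r => exists (d2fRN m q r); apply is_derive_dfRN; assumption
  | |- _ => progress nonzero
  end.

Ltac rewrite_Derive_fRN := repeat match goal with
  | |- context [Derive (fun x => fRN ?m ?q x) ?r] =>
      replace (Derive (fun x => fRN m q x) r) with (dfRN m q r)
        by (symmetry; apply is_derive_unique, is_derive_fRN; assumption)
  | |- context [Derive (fun x => dfRN ?m ?q x) ?r] =>
      replace (Derive (fun x => dfRN m q x) r) with (d2fRN m q r)
        by (symmetry; apply is_derive_unique, is_derive_dfRN; assumption)
  end.

Ltac derive_in_fRN :=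
  first [ apply is_derive_const
        | auto_derive; [derive_side | rewrite_Derive_fRN; field; derive_side] ].

Definition exterior (m q : R) (x : pt) : Prop := rplus m q < x 1%nat /\ 0 < x 2%nat < PI.

Lemma exterior_facts m q x : 0 < m -> exterior m q x ->
  0 < x 1%nat /\ 0 < fRN m q (x 1%nat) /\ 0 < sin (x 2%nat).
Proof.
  intros Hm [Hr Hth]. pose proof (rplus_ge_m m q).
  repeat split; [lra | apply fRN_pos; auto | apply sin_gt_0; lra].
Qed.

Ltac exterior_nonzero m q x Hm Hx :=
  let Hr := fresh in let Hf := fresh in let Hs := fresh in
  pose proof (exterior_facts m q x Hm Hx) as [Hr [Hf Hs]];
  assert (x 1%nat <> 0) by lra; assert (fRN m q (x 1%nat) <> 0) by lra;
  assert (sin (x 2%nat) <> 0) by lra.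

(* [Derive] is local and the exterior is open in [r] and [theta]. *)
Lemma pd_r_theta m q (F : pt -> R) (G : R -> R -> R) x k :
  (forall y, exterior m q y -> F y = G (y 1%nat) (y 2%nat)) -> exterior m q x ->
  pd k F x = match k with
             | 1%nat => Derive (fun s => G s (x 2%nat)) (x 1%nat)
             | 2%nat => Derive (fun s => G (x 1%nat) s) (x 2%nat)
             | _ => 0 end.
Proof.
  intros HF [Hx1 Hx2]. unfold pd.
  destruct k as [|[|[|k]]].
  - rewrite (Derive_ext _ (fun _ => G (x 1%nat) (x 2%nat))); [apply Derive_const|].
    intros t. rewrite HF; [reflexivity | split; simpl; auto].
  - apply Derive_ext_loc, (locally_interval _ _ (rplus m q) p_infty Hx1 I).
    intros y Hy _. rewrite HF; [reflexivity | split; simpl; auto].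
  - apply Derive_ext_loc, (locally_interval _ _ 0 PI (proj1 Hx2) (proj2 Hx2)).
    intros y Hy1 Hy2. rewrite HF; [reflexivity | split; simpl; auto].
  - rewrite (Derive_ext _ (fun _ => G (x 1%nat) (x 2%nat))); [apply Derive_const|].
    intros t. rewrite HF; [reflexivity | split; simpl; auto].
Qed.

Section Curvature.
Variables m q : R.
Hypothesis Hm : 0 < m.

Definition gl_rt (a b : nat) (r th : R) : R :=
  match a, b with
  | 0%nat, 0%nat => - fRN m q r
  | 1%nat, 1%nat => / fRN m q r
  | 2%nat, 2%nat => r ^ 2
  | 3%nat, 3%nat => r ^ 2 * (sin th) ^ 2
  | _, _ => 0
  end.

Definition gl_rt_dr (a b : nat) (r th : R) : R :=
  match a, b with
  | 0%nat, 0%nat => - dfRN m q r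
  | 1%nat, 1%nat => - dfRN m q r / (fRN m q r) ^ 2
  | 2%nat, 2%nat => 2 * r
  | 3%nat, 3%nat => 2 * r * (sin th) ^ 2
  | _, _ => 0
  end.

Definition gl_rt_dth (a b : nat) (r th : R) : R :=
  match a, b with
  | 3%nat, 3%nat => 2 * r ^ 2 * sin th * cos th
  | _, _ => 0
  end.

Lemma pd_gl x k a b : exterior m q x ->
  pd k (gl m q a b) x =
  match k with
  | 1%nat => gl_rt_dr a b (x 1%nat) (x 2%nat)
  | 2%nat => gl_rt_dth a b (x 1%nat) (x 2%nat)
  | _ => 0 end.
Proof.
  intros Hx. exterior_nonzero m q x Hm Hx.
  rewrite (pd_r_theta m q _ (gl_rt a b) x k); [| intros; reflexivity | exact Hx].
  destruct k as [|[|[|k]]]; try reflexivity; apply is_derive_unique;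
    destruct a as [|[|[|[|a]]]]; destruct b as [|[|[|[|b]]]];
    cbn [gl_rt gl_rt_dr gl_rt_dth]; derive_in_fRN.
Qed.

Lemma sum4_gu_diag l x (G : nat -> R) :
  sum4 (fun s => gu m q l s x * G s) = gu m q l l x * G l.
Proof. unfold sum4. destruct l as [|[|[|[|l]]]]; cbn [gu]; ring. Qed.

Lemma sum4_gl_diag l x (G : nat -> R) :
  sum4 (fun s => gl m q l s x * G s) = gl m q l l x * G l.
Proof. unfold sum4. destruct l as [|[|[|[|l]]]]; cbn [gl]; ring. Qed.

Definition christoffel (l a b : nat) (r th : R) : R :=
  let F := fRN m q r in let F1 := dfRN m q r in let s := sin th in let c := cos th in
  match l, a, b with
  | 0%nat, 0%nat, 1%nat | 0%nat, 1%nat, 0%nat => F1 / (2 * F)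
  | 1%nat, 0%nat, 0%nat => F * F1 / 2
  | 1%nat, 1%nat, 1%nat => - F1 / (2 * F)
  | 1%nat, 2%nat, 2%nat => - r * F
  | 1%nat, 3%nat, 3%nat => - r * F * s ^ 2
  | 2%nat, 1%nat, 2%nat | 2%nat, 2%nat, 1%nat => / r
  | 2%nat, 3%nat, 3%nat => - s * c
  | 3%nat, 1%nat, 3%nat | 3%nat, 3%nat, 1%nat => / r
  | 3%nat, 2%nat, 3%nat | 3%nat, 3%nat, 2%nat => c / s
  | _, _, _ => 0
  end.

Lemma Gam_christoffel x l a b : exterior m q x ->
  Gam m q l a b x = christoffel l a b (x 1%nat) (x 2%nat).
Proof.
  intros Hx. exterior_nonzero m q x Hm Hx.
  unfold Gam. rewrite sum4_gu_diag, !pd_gl by exact Hx.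
  destruct l as [|[|[|[|l]]]]; destruct a as [|[|[|[|a]]]]; destruct b as [|[|[|[|b]]]];
    cbn [gu christoffel gl_rt_dr gl_rt_dth]; first [ring | field; nonzero].
Qed.


Definition christoffel_dr (l a b : nat) (r th : R) : R :=
  let F := fRN m q r in let F1 := dfRN m q r in let F2 := d2fRN m q r in
  let s := sin th in
  match l, a, b with
  | 0%nat, 0%nat, 1%nat | 0%nat, 1%nat, 0%nat => (F2 * F - F1 ^ 2) / (2 * F ^ 2)
  | 1%nat, 0%nat, 0%nat => (F1 ^ 2 + F * F2) / 2
  | 1%nat, 1%nat, 1%nat => - (F2 * F - F1 ^ 2) / (2 * F ^ 2)
  | 1%nat, 2%nat, 2%nat => - (F + r * F1)
  | 1%nat, 3%nat, 3%nat => - (F + r * F1) * s ^ 2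
  | 2%nat, 1%nat, 2%nat | 2%nat, 2%nat, 1%nat => - / r ^ 2
  | 3%nat, 1%nat, 3%nat | 3%nat, 3%nat, 1%nat => - / r ^ 2
  | _, _, _ => 0
  end.

Definition christoffel_dth (l a b : nat) (r th : R) : R :=
  let F := fRN m q r in let s := sin th in let c := cos th in
  match l, a, b with
  | 1%nat, 3%nat, 3%nat => - r * F * (2 * s * c)
  | 2%nat, 3%nat, 3%nat => - (c * c - s * s)
  | 3%nat, 2%nat, 3%nat | 3%nat, 3%nat, 2%nat => - (c * c + s * s) / s ^ 2
  | _, _, _ => 0
  end.

Lemma pd_Gam x k l a b : exterior m q x ->
  pd k (Gam m q l a b) x =
  match k with
  | 1%nat => christoffel_dr l a b (x 1%nat) (x 2%nat)
  | 2%nat => christoffel_dth l a b (x 1%nat) (x 2%nat)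
  | _ => 0 end.
Proof.
  intros Hx. exterior_nonzero m q x Hm Hx.
  rewrite (pd_r_theta m q _ (christoffel l a b) x k);
    [| intros; apply Gam_christoffel; auto | exact Hx].
  destruct k as [|[|[|k]]]; try reflexivity; apply is_derive_unique;
    destruct l as [|[|[|[|l]]]]; destruct a as [|[|[|[|a]]]]; destruct b as [|[|[|[|b]]]];
    cbn [christoffel christoffel_dr christoffel_dth]; derive_in_fRN.
Qed.


Definition riem_pair (i j : nat) (r th : R) : R :=
  let F := fRN m q r in let F1 := dfRN m q r in let F2 := d2fRN m q r in
  let s := sin th in
  match i, j with
  | 0%nat, 1%nat => F2 / 2
  | 0%nat, 2%nat => F * F1 * r / 2
  | 0%nat, 3%nat => F * F1 * r * s ^ 2 / 2
  | 1%nat, 2%nat => - (F1 * r) / (2 * F)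
  | 1%nat, 3%nat => - (F1 * r * s ^ 2) / (2 * F)
  | 2%nat, 3%nat => (1 - F) * r ^ 2 * s ^ 2
  | _, _ => 0
  end.

(* [riem_pair i j] is [R_{ijij}] for [i < j]; every component of the Riemann tensor
   not obtained from these by the antisymmetries vanishes. *)
Definition riem_rt (a b c d : nat) (r th : R) : R :=
  if Nat.ltb a b then
    (if andb (Nat.eqb c a) (Nat.eqb d b) then riem_pair a b r th
     else if andb (Nat.eqb c b) (Nat.eqb d a) then - riem_pair a b r th else 0)
  else if Nat.ltb b a then
    (if andb (Nat.eqb c b) (Nat.eqb d a) then - riem_pair b a r th
     else if andb (Nat.eqb c a) (Nat.eqb d b) then riem_pair b a r th else 0)
  else 0.

Lemma Riem_riem_rt x a b c d : exterior m q x ->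
  (a < 4)%nat -> (b < 4)%nat -> (c < 4)%nat -> (d < 4)%nat ->
  Riem m q a b c d x = riem_rt a b c d (x 1%nat) (x 2%nat).
Proof.
  intros Hx Ha Hb Hc Hd. exterior_nonzero m q x Hm Hx.
  unfold Riem. rewrite sum4_gl_diag. unfold RiemU. rewrite !pd_Gam by exact Hx.
  unfold sum4. rewrite !Gam_christoffel by exact Hx.
  destruct a as [|[|[|[|a]]]]; try lia; destruct b as [|[|[|[|b]]]]; try lia;
  destruct c as [|[|[|[|c]]]]; try lia; destruct d as [|[|[|[|d]]]]; try lia;
    cbn [gl christoffel christoffel_dr christoffel_dth riem_rt riem_pair
         Nat.ltb Nat.leb Nat.eqb andb];
    first [ring | field; nonzero].
Qed.


Lemma sum4_gu_diag_scaled K r x (Z : nat -> R) :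
  sum4 (fun a => K * gu m q r a x * Z a) = K * gu m q r r x * Z r.
Proof. unfold sum4. destruct r as [|[|[|[|r]]]]; cbn [gu]; ring. Qed.

Lemma sum4_gu_diag2 K r s x (G : nat -> nat -> R) :
  sum4 (fun a => sum4 (fun b => K * gu m q r a x * gu m q s b x * G a b)) =
  K * gu m q r r x * gu m q s s x * G r s.
Proof.
  rewrite (sum4_ext _ (fun a => K * gu m q r a x * (gu m q s s x * G a s))).
  - rewrite sum4_gu_diag_scaled. ring.
  - intro a. rewrite (sum4_gu_diag_scaled (K * gu m q r a x) s x (fun b => G a b)). ring.
Qed.

Lemma sum4_gu_diag3 K r s t x (G : nat -> nat -> nat -> R) :
  sum4 (fun a => sum4 (fun b => sum4 (fun c =>
    K * gu m q r a x * gu m q s b x * gu m q t c x * G a b c))) =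
  K * gu m q r r x * gu m q s s x * gu m q t t x * G r s t.
Proof.
  rewrite (sum4_ext _ (fun a => K * gu m q r a x * (gu m q s s x * gu m q t t x * G a s t))).
  - rewrite sum4_gu_diag_scaled. ring.
  - intro a. rewrite (sum4_gu_diag2 (K * gu m q r a x) s t x (fun b c => G a b c)). ring.
Qed.

Lemma sum4_gu_diag4 K r s t u x (G : nat -> nat -> nat -> nat -> R) :
  sum4 (fun a => sum4 (fun b => sum4 (fun c => sum4 (fun d =>
    K * gu m q r a x * gu m q s b x * gu m q t c x * gu m q u d x * G a b c d)))) =
  K * gu m q r r x * gu m q s s x * gu m q t t x * gu m q u u x * G r s t u.
Proof.
  rewrite (sum4_ext _ (fun a => K * gu m q r a x *
     (gu m q s s x * gu m q t t x * gu m q u u x * G a s t u))).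
  - rewrite sum4_gu_diag_scaled. ring.
  - intro a. rewrite (sum4_gu_diag3 (K * gu m q r a x) s t u x (fun b c d => G a b c d)). ring.
Qed.

Definition kretschmann (x : pt) : R :=
  sum4 (fun rho => sum4 (fun tau => sum4 (fun sig => sum4 (fun nu =>
    Riem m q rho tau sig nu x * gu m q rho rho x * gu m q tau tau x * gu m q sig sig x
    * gu m q nu nu x * Riem m q rho tau sig nu x)))).

Definition Bel_diag (al be la mu : nat) (x : pt) : R :=
  sum4 (fun rho => sum4 (fun sig =>
     Riem m q al rho la sig x * gu m q rho rho x * gu m q sig sig x * Riem m q be rho mu sig x))
  + sum4 (fun rho => sum4 (fun sig =>
     Riem m q al rho mu sig x * gu m q rho rho x * gu m q sig sig x * Riem m q be rho la sig x))
  - / 2 * gl m q al be x *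
    sum4 (fun rho => sum4 (fun tau => sum4 (fun sig =>
       Riem m q rho tau la sig x * gu m q rho rho x * gu m q tau tau x * gu m q sig sig x
       * Riem m q rho tau mu sig x)))
  - / 2 * gl m q la mu x *
    sum4 (fun rho => sum4 (fun sig => sum4 (fun tau =>
       Riem m q al rho sig tau x * gu m q rho rho x * gu m q sig sig x * gu m q tau tau x
       * Riem m q be rho sig tau x)))
  + / 8 * gl m q al be x * gl m q la mu x * kretschmann x.

Lemma Bel_Bel_diag al be la mu x : Bel m q al be la mu x = Bel_diag al be la mu x.
Proof.
  unfold Bel, Bel_diag, kretschmann. f_equal; [f_equal; [f_equal; [f_equal|]|]|].
  - apply sum4_ext; intro rho; apply sum4_ext; intro sig.
    apply (sum4_gu_diag2 _ rho sig x (fun a b => Riem m q be a mu b x)).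
  - apply sum4_ext; intro rho; apply sum4_ext; intro sig.
    apply (sum4_gu_diag2 _ rho sig x (fun a b => Riem m q be a la b x)).
  - f_equal. apply sum4_ext; intro rho; apply sum4_ext; intro tau; apply sum4_ext; intro sig.
    apply (sum4_gu_diag3 _ rho tau sig x (fun a b c => Riem m q a b mu c x)).
  - f_equal. apply sum4_ext; intro rho; apply sum4_ext; intro sig; apply sum4_ext; intro tau.
    apply (sum4_gu_diag3 _ rho sig tau x (fun a b c => Riem m q be a b c x)).
  - f_equal. apply sum4_ext; intro rho; apply sum4_ext; intro tau; apply sum4_ext; intro sig;
      apply sum4_ext; intro nu.
    apply (sum4_gu_diag4 _ rho tau sig nu x (fun a b c d => Riem m q a b c d x)).
Qed.

(* Minus the sectional curvatures of the (t,r) and (t,theta) planes, and the sectional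
   curvature of the (theta,phi) plane. *)
Definition curv_tr (r : R) : R := d2fRN m q r / 2.
Definition curv_ta (r : R) : R := dfRN m q r / (2 * r).
Definition curv_ang (r : R) : R := (1 - fRN m q r) / r ^ 2.

Lemma kretschmann_eq x : exterior m q x ->
  kretschmann x =
  4 * (curv_tr (x 1%nat) ^ 2 + 4 * curv_ta (x 1%nat) ^ 2 + curv_ang (x 1%nat) ^ 2).
Proof.
  intros Hx. exterior_nonzero m q x Hm Hx.
  unfold kretschmann, sum4. rewrite !Riem_riem_rt by (auto; lia).
  cbn [gl gu riem_rt riem_pair Nat.ltb Nat.leb Nat.eqb andb].
  unfold curv_tr, curv_ta, curv_ang. field. nonzero.
Qed.

Ltac Bel_component x Hx :=
  rewrite Bel_Bel_diag; unfold Bel_diag; rewrite (kretschmann_eq x Hx);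
  exterior_nonzero m q x Hm Hx;
  unfold sum4; rewrite !Riem_riem_rt by (auto; lia);
  cbn [gl gu riem_rt riem_pair Nat.ltb Nat.leb Nat.eqb andb];
  unfold curv_tr, curv_ta, curv_ang; field; nonzero.

Lemma Bel_0000 x : exterior m q x ->
  Bel m q 0 0 0 0 x = fRN m q (x 1%nat) ^ 2 *
    (curv_tr (x 1%nat) ^ 2 + 4 * curv_ta (x 1%nat) ^ 2 + curv_ang (x 1%nat) ^ 2) / 2.
Proof. intros Hx. Bel_component x Hx. Qed.

Lemma Bel_ab00 x a b : exterior m q x -> (2 <= a <= 3)%nat -> (2 <= b <= 3)%nat ->
  Bel m q a b 0 0 x = gl m q a b x * fRN m q (x 1%nat) *
    ((curv_tr (x 1%nat) ^ 2 + curv_ang (x 1%nat) ^ 2) / 2).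
Proof.
  intros Hx Ha Hb.
  destruct a as [|[|[|[|a]]]]; try lia; destruct b as [|[|[|[|b]]]]; try lia;
    Bel_component x Hx.
Qed.

Lemma Bel_a0b0 x a b : exterior m q x -> (2 <= a <= 3)%nat -> (2 <= b <= 3)%nat ->
  Bel m q a 0 b 0 x = gl m q a b x * fRN m q (x 1%nat) *
    (curv_ta (x 1%nat) * (curv_ang (x 1%nat) - curv_tr (x 1%nat))).
Proof.
  intros Hx Ha Hb.
  destruct a as [|[|[|[|a]]]]; try lia; destruct b as [|[|[|[|b]]]]; try lia;
    Bel_component x Hx.
Qed.

Lemma Bel_0ab0 x a b : exterior m q x -> (2 <= a <= 3)%nat -> (2 <= b <= 3)%nat ->
  Bel m q 0 a b 0 x = gl m q a b x * fRN m q (x 1%nat) *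
    (curv_ta (x 1%nat) * (curv_ang (x 1%nat) - curv_tr (x 1%nat))).
Proof.
  intros Hx Ha Hb.
  destruct a as [|[|[|[|a]]]]; try lia; destruct b as [|[|[|[|b]]]]; try lia;
    Bel_component x Hx.
Qed.

End Curvature.

(** * Flux densities *)

Definition rho_xi1 (m q r : R) : R :=
  6 * m ^ 2 / r ^ 4 - 12 * m * (q ^ 2 + m ^ 2) / r ^ 5
  + (7 * q ^ 4 + 30 * m ^ 2 * q ^ 2) / r ^ 6 - 26 * m * q ^ 4 / r ^ 7 + 7 * q ^ 6 / r ^ 8.
Definition rho_ang (m q r : R) : R :=
  4 * m ^ 2 / r ^ 2 - 8 * m * q ^ 2 / r ^ 3 + 13 * q ^ 4 / (3 * r ^ 4).

Lemma flux_density_xi1 m q x : 0 < m -> exterior m q x ->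
  - beljU m q xi1 xi1 xi1 x 0%nat * x 1%nat ^ 2 = rho_xi1 m q (x 1%nat).
Proof.
  intros Hm Hx. unfold beljU. rewrite sum4_gu_diag. unfold belj, sum4. cbn [xi1 gu].
  rewrite !Bel_0000 by auto. exterior_nonzero m q x Hm Hx.
  unfold rho_xi1, curv_tr, curv_ta, curv_ang, dfRN, d2fRN, fRN. field.
  split; [assumption | apply fRN_numerator_neq0; assumption].
Qed.

Lemma flux_density_angular m q (X : vfield) x : 0 < m -> exterior m q x ->
  X x 0%nat = 0 -> X x 1%nat = 0 ->
  - beljU m q X X xi1 x 0%nat * x 1%nat ^ 2 =
  (X x 2%nat ^ 2 + sin (x 2%nat) ^ 2 * X x 3%nat ^ 2) * rho_ang m q (x 1%nat).
Proof.
  intros Hm Hx HX0 HX1. unfold beljU. rewrite sum4_gu_diag. unfold belj, sum4.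
  cbn [xi1 gu]. rewrite HX0, HX1.
  pose proof (fun a b => Bel_ab00 m q Hm x a b Hx) as E1.
  pose proof (fun a b => Bel_a0b0 m q Hm x a b Hx) as E2.
  pose proof (fun a b => Bel_0ab0 m q Hm x a b Hx) as E3.
  rewrite (E1 2 2)%nat, (E1 2 3)%nat, (E1 3 2)%nat, (E1 3 3)%nat,
    (E2 2 2)%nat, (E2 2 3)%nat, (E2 3 2)%nat, (E2 3 3)%nat,
    (E3 2 2)%nat, (E3 2 3)%nat, (E3 3 2)%nat, (E3 3 3)%nat by lia.
  exterior_nonzero m q x Hm Hx. cbn [gl].
  unfold rho_ang, curv_tr, curv_ta, curv_ang, dfRN, d2fRN, fRN. field.
  split; [assumption | apply fRN_numerator_neq0; assumption].
Qed.

Lemma flux_density_EM m q x : 0 < m -> exterior m q x ->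
  - EMcur m q xi1 x 0%nat * x 1%nat ^ 2 = q ^ 2 / x 1%nat ^ 2.
Proof.
  intros Hm Hx. exterior_nonzero m q x Hm Hx. unfold EMcur, sum4. cbn [Tmix gu gl xi1].
  field. nonzero.
Qed.

(** * Integrals *)

Lemma is_RInt_gen_inv_primitive (r0 : R) (P h : R -> R) : 0 < r0 ->
  (forall r, 0 < r -> is_derive (fun s => P (/ s)) r (h r)) ->
  (forall r, 0 < r -> continuous h r) ->
  continuous P 0 -> P 0 = 0 ->
  is_RInt_gen h (at_right r0) (Rbar_locally p_infty) (- P (/ r0)).
Proof.
  intros Hr0 HP Hh HP0 P0.
  set (F := fun s => P (/ s)).
  assert (HDF : forall r, 0 < r -> Derive F r = h r)
    by (intros r Hr; apply is_derive_unique, HP, Hr).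
  assert (HcDF : forall r, 0 < r -> continuous (Derive F) r).
  { intros r Hr. apply (continuous_ext_loc _ h); [|apply Hh, Hr].
    apply (locally_interval _ r 0 p_infty Hr I). intros y Hy _. symmetry. apply HDF, Hy. }
  assert (Hpos : filter_prod (at_right r0) (Rbar_locally p_infty) (fun ab : R * R =>
            forall x, Rmin (fst ab) (snd ab) <= x <= Rmax (fst ab) (snd ab) -> 0 < x)).
  { apply Filter_prod with (Q := fun a => 0 < a) (R := fun b => 0 < b).
    - exists (mkposreal _ Hr0). intros a _ Ha. simpl in Ha. lra.
    - exists 0. intros; lra.
    - intros a b Ha Hb x Hx. simpl in Hx. pose proof (Rmin_glb_lt a b 0 Ha Hb). lra. }
  apply (is_RInt_gen_ext (Derive F)).
  { apply (filter_imp _ _ (fun ab Hab x Hx =>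
      HDF x (Hab x (conj (Rlt_le _ _ (proj1 Hx)) (Rlt_le _ _ (proj2 Hx))))) Hpos). }
  replace (- P (/ r0)) with (0 - F r0) by (unfold F; ring).
  apply is_RInt_gen_Derive.
  - apply (filter_imp _ _ (fun ab Hab x Hx => ex_intro _ _ (HP x (Hab x Hx))) Hpos).
  - apply (filter_imp _ _ (fun ab Hab x Hx => HcDF x (Hab x Hx)) Hpos).
  - apply (filterlim_filter_le_1 (F := locally r0)); [apply filter_le_within|].
    exact (ex_derive_continuous F r0 (ex_intro _ _ (HP r0 Hr0))).
  - unfold F. rewrite <- P0. apply (filterlim_comp _ _ _ Rinv P _ (locally 0)); [|exact HP0].
    assert (H := filterlim_Rbar_inv p_infty). simpl in H. apply H. discriminate.
Qed.

Lemma is_RInt_derive_everywhere (F f : R -> R) (a b : R) :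
  (forall x, is_derive F x (f x)) -> (forall x, continuous f x) ->
  is_RInt f a b (F b - F a).
Proof.
  intros HF Hf. apply (is_RInt_derive F f); intros x _; auto.
Qed.

Lemma is_RInt_sin_cos2 (a b : R) :
  is_RInt (fun th => sin th * (a + b * cos th ^ 2)) 0 PI (2 * a + 2 / 3 * b).
Proof.
  replace (2 * a + 2 / 3 * b) with
    ((- a * cos PI - b / 3 * cos PI ^ 3) - (- a * cos 0 - b / 3 * cos 0 ^ 3))
    by (rewrite cos_PI, cos_0; field).
  apply (is_RInt_derive_everywhere (fun th => - a * cos th - b / 3 * cos th ^ 3)).
  - intros x. auto_derive; [easy | field].
  - intros x. apply (ex_derive_continuous (V := R_NormedModule)). auto_derive. easy.
Qed.

Lemma is_RInt_sin2_cos2 (a b : R) :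
  is_RInt (fun ph => a * sin ph ^ 2 + b * cos ph ^ 2) 0 (2 * PI) (PI * (a + b)).
Proof.
  replace (PI * (a + b)) with
    ((a * (2 * PI - sin (2 * PI) * cos (2 * PI)) + b * (2 * PI + sin (2 * PI) * cos (2 * PI))) / 2
     - (a * (0 - sin 0 * cos 0) + b * (0 + sin 0 * cos 0)) / 2)
    by (rewrite sin_2PI, cos_2PI, sin_0, cos_0; field).
  apply (is_RInt_derive_everywhere
    (fun ph => (a * (ph - sin ph * cos ph) + b * (ph + sin ph * cos ph)) / 2)).
  - intros x. auto_derive; [easy |].
    field_simplify. rewrite <- (Rsqr_pow2 (sin x)), sin2, Rsqr_pow2. field.
  - intros x. apply (ex_derive_continuous (V := R_NormedModule)). auto_derive. easy.
Qed.

Lemma is_RInt_const_period (c : R) : is_RInt (fun _ => c) 0 (2 * PI) (2 * PI * c).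
Proof.
  replace (2 * PI * c) with (scal (2 * PI - 0) c) by (rewrite Rminus_0_r; reflexivity).
  exact (is_RInt_const (V := R_NormedModule) 0 (2 * PI) c).
Qed.

Lemma Qflux_separable m q t0 (A : vfield) (a b h : R -> R) (I S : R) :
  (forall r th ph, rplus m q < r -> 0 < th < PI ->
     - A (mkpt t0 r th ph) 0%nat * r ^ 2 = (a ph + b ph * cos th ^ 2) * h r) ->
  is_RInt_gen h (at_right (rplus m q)) (Rbar_locally p_infty) I ->
  is_RInt (fun ph => 2 * a ph + 2 / 3 * b ph) 0 (2 * PI) S ->
  Qflux m q t0 A = I * S.
Proof.
  intros HA HI HS. unfold Qflux. apply is_RInt_unique.
  apply (is_RInt_ext (fun ph => I * (2 * a ph + 2 / 3 * b ph)));
    [|exact (is_RInt_scal _ _ _ I _ HS)].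
  intros ph _. symmetry. apply is_RInt_unique.
  apply (is_RInt_ext (fun th => I * (sin th * (a ph + b ph * cos th ^ 2))));
    [|exact (is_RInt_scal _ _ _ I _ (is_RInt_sin_cos2 (a ph) (b ph)))].
  intros th Hth. rewrite Rmin_left, Rmax_right in Hth by (pose proof PI_RGT_0; lra).
  replace (RInt_gen _ _ _) with ((a ph + b ph * cos th ^ 2) * I); [simpl; ring|].
  symmetry. apply is_RInt_gen_unique.
  apply (is_RInt_gen_ext (fun r => scal (a ph + b ph * cos th ^ 2) (h r)));
    [|exact (is_RInt_gen_scal h _ I HI)].
  apply Filter_prod with (Q := fun r => rplus m q < r) (R := fun r => rplus m q < r).
  - exists (mkposreal 1 Rlt_0_1). intros r _ Hr. exact Hr.
  - exists (rplus m q). intros; auto.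
  - intros r1 r2 H1 H2 r Hr. simpl in Hr. symmetry. apply HA; [|exact Hth].
    pose proof (Rmin_glb_lt _ _ _ H1 H2). lra.
Qed.


Definition prim_xi1 (m q u : R) : R :=
  - (2 * m ^ 2 * u ^ 3 - 3 * m * (q ^ 2 + m ^ 2) * u ^ 4
     + (7 * (q ^ 2) ^ 2 + 30 * m ^ 2 * q ^ 2) / 5 * u ^ 5
     - 13 * m * (q ^ 2) ^ 2 / 3 * u ^ 6 + (q ^ 2) ^ 3 * u ^ 7).
Definition prim_ang (m q u : R) : R :=
  - (4 * m ^ 2 * u - 4 * m * q ^ 2 * u ^ 2 + 13 * (q ^ 2) ^ 2 / 9 * u ^ 3).

Ltac continuity_by_derive :=
  apply (ex_derive_continuous (V := R_NormedModule)); auto_derive; nonzero.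

Section RadialIntegrals.
Variables m q : R.
Hypothesis Hm : 0 < m.

Ltac improper_integral_by_primitive P :=
  apply (is_RInt_gen_inv_primitive _ P);
  unfold rho_xi1, rho_ang, prim_xi1, prim_ang;
  [ pose proof (rplus_ge_m m q); lra
  | intros r Hr; auto_derive; [nonzero | field; lra]
  | intros r Hr; continuity_by_derive
  | continuity_by_derive
  | ring ].

Lemma is_RInt_gen_rho_xi1 :
  is_RInt_gen (rho_xi1 m q) (at_right (rplus m q)) (Rbar_locally p_infty)
    (- prim_xi1 m q (/ rplus m q)).
Proof. improper_integral_by_primitive (prim_xi1 m q). Qed.

Lemma is_RInt_gen_rho_ang :
  is_RInt_gen (rho_ang m q) (at_right (rplus m q)) (Rbar_locally p_infty)
    (- prim_ang m q (/ rplus m q)).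
Proof. improper_integral_by_primitive (prim_ang m q). Qed.

Lemma is_RInt_gen_rho_EM :
  is_RInt_gen (fun r => q ^ 2 / r ^ 2) (at_right (rplus m q)) (Rbar_locally p_infty)
    (q ^ 2 / rplus m q).
Proof.
  replace (q ^ 2 / rplus m q) with (- - (q ^ 2 * / rplus m q)) by (unfold Rdiv; ring).
  improper_integral_by_primitive (fun u => - (q ^ 2 * u)).
Qed.

End RadialIntegrals.

(** * The fluxes *)

Section Fluxes.
Variables m q t0 : R.
Hypothesis Hm : 0 < m.

Lemma Qflux_xi1 :
  Qflux m q t0 (beljU m q xi1 xi1 xi1) = - prim_xi1 m q (/ rplus m q) * (4 * PI).
Proof.
  apply (Qflux_separable _ _ _ _ (fun _ => 1) (fun _ => 0) (rho_xi1 m q)).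
  - intros r th ph Hr Hth.
    pose proof (flux_density_xi1 m q (mkpt t0 r th ph) Hm (conj Hr Hth)) as H.
    cbn [mkpt] in H. rewrite H. ring.
  - apply is_RInt_gen_rho_xi1, Hm.
  - replace (4 * PI) with (2 * PI * (2 * 1 + 2 / 3 * 0)) by ring.
    apply is_RInt_const_period.
Qed.

Lemma Qflux_EM : Qflux m q t0 (EMcur m q xi1) = q ^ 2 / rplus m q * (4 * PI).
Proof.
  apply (Qflux_separable _ _ _ _ (fun _ => 1) (fun _ => 0) (fun r => q ^ 2 / r ^ 2)).
  - intros r th ph Hr Hth.
    pose proof (flux_density_EM m q (mkpt t0 r th ph) Hm (conj Hr Hth)) as H.
    cbn [mkpt] in H. rewrite H. ring.
  - apply is_RInt_gen_rho_EM, Hm.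
  - replace (4 * PI) with (2 * PI * (2 * 1 + 2 / 3 * 0)) by ring.
    apply is_RInt_const_period.
Qed.

Lemma Qflux_angular (X : vfield) : X = xi2 \/ X = xi3 \/ X = xi4 ->
  Qflux m q t0 (beljU m q X X xi1) = - prim_ang m q (/ rplus m q) * (8 * PI / 3).
Proof.
  intros HX.
  assert (Hdens : forall r th ph, rplus m q < r -> 0 < th < PI ->
    - beljU m q X X xi1 (mkpt t0 r th ph) 0%nat * r ^ 2 =
    (X (mkpt t0 r th ph) 2%nat ^ 2 + sin th ^ 2 * X (mkpt t0 r th ph) 3%nat ^ 2) * rho_ang m q r).
  { intros r th ph Hr Hth.
    apply (flux_density_angular m q X (mkpt t0 r th ph) Hm (conj Hr Hth));
      destruct HX as [-> | [-> | ->]]; reflexivity. }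
  destruct HX as [-> | [-> | ->]].
  - apply (Qflux_separable _ _ _ _ (fun ph => sin ph ^ 2) (fun ph => cos ph ^ 2) (rho_ang m q)).
    + intros r th ph Hr Hth. rewrite (Hdens r th ph Hr Hth). cbn [xi2 mkpt].
      assert (sin th <> 0) by (apply Rgt_not_eq, sin_gt_0; lra). field. assumption.
    + apply is_RInt_gen_rho_ang, Hm.
    + replace (8 * PI / 3) with (PI * (2 + 2 / 3)) by field. apply is_RInt_sin2_cos2.
  - apply (Qflux_separable _ _ _ _ (fun ph => cos ph ^ 2) (fun ph => sin ph ^ 2) (rho_ang m q)).
    + intros r th ph Hr Hth. rewrite (Hdens r th ph Hr Hth). cbn [xi3 mkpt].
      assert (sin th <> 0) by (apply Rgt_not_eq, sin_gt_0; lra). field. assumption.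
    + apply is_RInt_gen_rho_ang, Hm.
    + replace (8 * PI / 3) with (PI * (2 / 3 + 2)) by field.
      apply (is_RInt_ext (fun ph => 2 / 3 * sin ph ^ 2 + 2 * cos ph ^ 2));
        [intros; simpl; ring | apply is_RInt_sin2_cos2].
  - apply (Qflux_separable _ _ _ _ (fun _ => 1) (fun _ => -1) (rho_ang m q)).
    + intros r th ph Hr Hth. rewrite (Hdens r th ph Hr Hth). cbn [xi4 mkpt].
      rewrite <- (Rsqr_pow2 (sin th)), sin2, Rsqr_pow2. ring.
    + apply is_RInt_gen_rho_ang, Hm.
    + replace (8 * PI / 3) with (2 * PI * (2 * 1 + 2 / 3 * -1)) by field.
      apply is_RInt_const_period.
Qed.

End Fluxes.

Theorem mainTheorem8 (m q : R) (Hm : 0 < m) (Hmq : q ^ 2 <= m ^ 2) :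
  let rp := rplus m q in
  (forall t0 : R,
     Qflux m q t0 (beljU m q xi1 xi1 xi1) =
     4 * PI / (15 * rp) *
       (6 - 14 * (m / rp) + 14 * (m ^ 2 / rp ^ 2) - 5 * (m ^ 3 / rp ^ 3))) /\
  (forall (X : vfield), X = xi2 \/ X = xi3 \/ X = xi4 ->
   forall t0 : R,
     Qflux m q t0 (beljU m q X X xi1) =
     8 * PI / 27 * rp * (13 - 16 * (m / rp) + 16 * (m ^ 2 / rp ^ 2))) /\
  (forall t0 : R, Qflux m q t0 (EMcur m q xi1) = 4 * PI * q ^ 2 / rp) /\
  (q = 0 ->
     (forall t0 : R, Qflux m q t0 (beljU m q xi1 xi1 xi1) = PI / (4 * m)) /\
     (forall (X : vfield), X = xi2 \/ X = xi3 \/ X = xi4 ->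
      forall t0 : R, Qflux m q t0 (beljU m q X X xi1) = 16 * PI * m / 3)).
Proof.
  intros rp.
  assert (Hrp : m <= rp) by apply rplus_ge_m.
  assert (Hq : q ^ 2 = 2 * m * rp - rp ^ 2) by (apply rplus_horizon, Hmq).
  assert (Q1 : forall t0, Qflux m q t0 (beljU m q xi1 xi1 xi1) =
     4 * PI / (15 * rp) * (6 - 14 * (m / rp) + 14 * (m ^ 2 / rp ^ 2) - 5 * (m ^ 3 / rp ^ 3))).
  { intros t0. rewrite Qflux_xi1 by exact Hm. fold rp. unfold prim_xi1. rewrite Hq. field. lra. }
  assert (Q2 : forall X : vfield, X = xi2 \/ X = xi3 \/ X = xi4 -> forall t0,
     Qflux m q t0 (beljU m q X X xi1) =
     8 * PI / 27 * rp * (13 - 16 * (m / rp) + 16 * (m ^ 2 / rp ^ 2))).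
  { intros X HX t0. rewrite Qflux_angular by assumption. fold rp. unfold prim_ang.
    rewrite Hq. field. lra. }
  split; [exact Q1 | split; [exact Q2 | split]].
  - intros t0. rewrite Qflux_EM by exact Hm. fold rp. field. lra.
  - intros Hq0. subst q.
    assert (Hrp2 : rp = 2 * m) by nra.
    split.
    + intros t0. rewrite Q1, Hrp2. field. lra.
    + intros X HX t0. rewrite (Q2 X HX t0), Hrp2. field. lra.
Qed.
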